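(* Let $(X,d)$ be a quasi-tree with bottleneck constant $\Delta\geqslant0$ which is $\delta$-hyperbolic, and let $x_0\in X$. Then the end-approximating map $f:X\to T_X$, $f(x)=[x]$, is a $(1,2(\Delta+2\delta))$-quasi-isometry; more precisely, it is surjective and $d(x,y)-2(\Delta+2\delta)\leqslant d^*([x],[y])\leqslant d(x,y)$ for all $x,y\in X$.
   Context: A quasi-tree is a geodesic metric space quasi-isometric to a simplicial tree. $X$ is $\delta$-hyperbolic if every geodesic triangle is $\delta$-slim (each point of a side is within $\delta$ of the union of the other two sides). A bottleneck constant is $\Delta\geqslant0$ such that for every geodesic $[x,y]$ and every $z\in[x,y]$, every path from $x$ to $y$ meets the closed ball $B(z,\Delta)$. End-approximating tree: with $(x,y)_{x_0}=\frac12(d(x_0,x)+d(x_0,y)-d(x,y))$, set $(x,y)'_{x_0}=\sup\min_{1\leqslant i\leqslant n-1}(x_i,x_{i+1})_{x_0}$ over all finite sequences $x=x_1,\ldots,x_n=y$ in $X$, and $d'(x,y)=d(x_0,x)+d(x_0,y)-2(x,y)'_{x_0}$; $T_X=X/\sim$ with $x\sim y$ iff $d'(x,y)=0$, metric $d^*([x],[y])=d'(x,y)$. A $(1,C)$-quasi-isometry $g$ satisfies $d(a,b)-C\leqslant d(g(a),g(b))\leqslant d(a,b)+C$ and has $C$-dense image. *)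

From mathcomp Require Import all_boot all_order all_algebra.
From mathcomp Require Import boolp classical_sets reals.
Set Implicit Arguments. Unset Strict Implicit. Unset Printing Implicit Defensive.
Import Order.TTheory GRing.Theory Num.Theory.
Local Open Scope ring_scope.
Local Open Scope classical_set_scope.

Section Defs.
Variables (R : realType) (T : Type) (d : T -> T -> R).

Definition is_metric : Prop :=
  (forall x y, 0 <= d x y) /\ (forall x y, d x y = 0 <-> x = y) /\
  (forall x y, d x y = d y x) /\ (forall x y z, d x z <= d x y + d y z).

Definition geodesic (x y : T) (gam : R -> T) : Prop :=
  gam 0 = x /\ gam (d x y) = y /\
  forall s t, 0 <= s <= d x y -> 0 <= t <= d x y -> d (gam s) (gam t) = `|s - t|.

Definition on_geodesic (x y : T) (gam : R -> T) (z : T) : Prop :=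
  exists t, 0 <= t <= d x y /\ gam t = z.

Definition geodesic_space : Prop := forall x y, exists gam, geodesic x y gam.

Definition path_from_to (x y : T) (p : R -> T) : Prop :=
  p 0 = x /\ p 1 = y /\
  forall t, 0 <= t <= 1 -> forall e, 0 < e -> exists2 eta, 0 < eta &
    forall s, 0 <= s <= 1 -> `|s - t| < eta -> d (p s) (p t) < e.

Definition bottleneck (Delta : R) : Prop :=
  forall x y gam z, geodesic x y gam -> on_geodesic x y gam z ->
  forall p, path_from_to x y p -> exists t, 0 <= t <= 1 /\ d (p t) z <= Delta.

Definition side_close (delta : R) (x y : T) (g : R -> T)
  (y' z : T) (h : R -> T) (z' x' : T) (k : R -> T) : Prop :=
  forall p, on_geodesic x y g p ->
    exists q, (on_geodesic y' z h q \/ on_geodesic z' x' k q) /\ d p q <= delta.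

Definition hyperbolic (delta : R) : Prop :=
  forall x y z gxy gyz gzx,
    geodesic x y gxy -> geodesic y z gyz -> geodesic z x gzx ->
    side_close delta x y gxy y z gyz z x gzx /\
    side_close delta y z gyz z x gzx x y gxy /\
    side_close delta z x gzx x y gxy y z gyz.

Definition gromov (x0 x y : T) : R := (d x0 x + d x0 y - d x y) / 2.

Fixpoint chain_min (x0 a : T) (s : seq T) : R :=
  match s with
  | [::] => 0
  | b :: s' =>
      match s' with
      | [::] => gromov x0 a b
      | _ :: _ => Num.min (gromov x0 a b) (chain_min x0 b s')
      end
  end.

(* (x,y)'_{x0}: sup over finite sequences x = x_1, ..., x_n = y (n >= 2) *)
Definition gromov' (x0 x y : T) : R :=
  sup [set r | exists s : seq T, (0 < size s)%N /\ last x s = y /\ r = chain_min x0 x s].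

Definition dprime (x0 x y : T) : R := d x0 x + d x0 y - 2 * gromov' x0 x y.

(* end-approximating tree T_X = X / ~ as a set of equivalence classes *)
Definition eclass (x0 x : T) : set T := [set y | dprime x0 x y = 0].
Definition TX (x0 : T) : set (set T) := [set S | exists x, S = eclass x0 x].
Definition dstar (x0 : T) (S S' : set T) (r : R) : Prop :=
  exists x y, S = eclass x0 x /\ S' = eclass x0 y /\ r = dprime x0 x y.

End Defs.

Section Trees.
Variables (V : Type) (adj : V -> V -> Prop).

Fixpoint is_walk (u : V) (s : seq V) (v : V) : Prop :=
  match s with
  | [::] => u = v
  | w :: s' => adj u w /\ is_walk w s' v
  end.

Fixpoint inP (a : V) (s : seq V) : Prop :=
  match s with [::] => False | b :: s' => a = b \/ inP a s' end.
Fixpoint distinctP (s : seq V) : Prop :=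
  match s with [::] => True | b :: s' => ~ inP b s' /\ distinctP s' end.

Definition tree_dist (u v : V) (n : nat) : Prop :=
  (exists s, is_walk u s v /\ size s = n) /\
  (forall s, is_walk u s v -> (n <= size s)%N).

Definition simplicial_tree : Prop :=
  (forall u v, adj u v -> adj v u) /\ (forall u, ~ adj u u) /\
  (forall u v, exists s, is_walk u s v) /\
  (* no cycle u -> w1 -> ... -> wk = u with k >= 3 and u, w1, ..., w_{k-1} distinct *)
  (forall u s, (3 <= size s)%N -> is_walk u s u ->
      ~ distinctP (belast u s)).
End Trees.

Definition quasi_tree (R : realType) (T : Type) (d : T -> T -> R) : Prop :=
  exists (V : Type) (adj : V -> V -> Prop) (g : T -> V) (K C : R),
    simplicial_tree adj /\ 1 <= K /\ 0 <= C /\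
    (forall x y n, tree_dist adj (g x) (g y) n ->
        d x y / K - C <= n%:R /\ n%:R <= K * d x y + C) /\
    (forall v, exists x n, tree_dist adj (g x) v n /\ n%:R <= C).

From mathcomp Require Import all_boot all_order all_algebra.
From mathcomp Require Import boolp classical_sets reals.
From mathcomp Require Import lra.
Set Implicit Arguments. Unset Strict Implicit.
Import Order.TTheory GRing.Theory Num.Theory.
Local Open Scope ring_scope.
Local Open Scope classical_set_scope.

(* Write (x,y) for the Gromov product at x0 and (x,y)' for its chain version.
   Always (x,y) <= (x,y)' <= d(x0,x), d(x0,y), and (x,y)' satisfies
   (x,z)' >= min((x,y)', (y,z)') because chains concatenate, so d' is a
   pseudometric and d* is well defined on classes; (x,y) <= (x,y)' gives
   d' <= d.  Conversely, join a chain x = x_1, ..., x_n = y by geodesics: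
   along this path d(x0, .) stays above the chain minimum, while by
   delta-hyperbolicity some point z of a geodesic [x,y] has
   d(x0,z) <= (x,y) + 2 delta.  The path passes within Delta of z, so the
   chain minimum is at most (x,y) + Delta + 2 delta, whence
   d' >= d - 2 (Delta + 2 delta). *)

Section Metric.
Variables (R : realType) (T : Type) (d : T -> T -> R).
Hypothesis d_metric : is_metric d.

Lemma dist_ge0 x y : 0 <= d x y. Proof. by case: d_metric. Qed.
Lemma dist_xx x : d x x = 0. Proof. by case: d_metric => _ [h _]; apply/h. Qed.
Lemma distC x y : d x y = d y x. Proof. by case: d_metric => _ [_ [h _]]. Qed.
Lemma dist_triangle x y z : d x z <= d x y + d y z.
Proof. by case: d_metric => _ [_ [_ h]]. Qed.

Lemma geodesic_dist_start x y g t :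
  geodesic d x y g -> 0 <= t <= d x y -> d x (g t) = t.
Proof.
case=> [g0 [_ g_iso]] /andP[t0 t1]; have := dist_ge0 x y => d_ge0.
by rewrite -[x in d x _]g0 g_iso ?lexx ?d_ge0 ?t0 ?t1 // sub0r normrN ger0_norm.
Qed.

Lemma geodesic_dist_end x y g t :
  geodesic d x y g -> 0 <= t <= d x y -> d (g t) y = d x y - t.
Proof.
case=> [_ [g1 g_iso]] /andP[t0 t1]; have := dist_ge0 x y => d_ge0.
by rewrite -[y in d _ y]g1 g_iso ?lexx ?d_ge0 ?t0 ?t1 // distrC ger0_norm ?subr_ge0.
Qed.

Definition continuous_within (p : R -> T) (a b t : R) : Prop :=
  forall e, 0 < e -> exists2 eta, 0 < eta &
    forall s, a <= s <= b -> `|s - t| < eta -> d (p s) (p t) < e.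

Lemma continuous_within_outside p a b t :
  t < a \/ b < t -> continuous_within p a b t.
Proof.
move=> t_out e _.
case: t_out => ht; [exists (a - t) | exists (t - b)]; rewrite ?subr_gt0 //;
  by move=> s /andP[s_a s_b]; rewrite ltr_norml => /andP[st1 st2]; lra.
Qed.

Lemma continuous_within_glue p a m b t :
  continuous_within p a m t -> continuous_within p m b t ->
  continuous_within p a b t.
Proof.
move=> cl cr e e_gt0.
have [eta1 eta1_gt0 h1] := cl e e_gt0; have [eta2 eta2_gt0 h2] := cr e e_gt0.
exists (Num.min eta1 eta2); first by rewrite lt_min eta1_gt0.
move=> s /andP[s_a s_b]; rewrite lt_min => /andP[st1 st2].
by case: (lerP s m) => s_m; [apply: h1 | apply: h2] => //; apply/andP; split; lra.
Qed.

Lemma continuous_within_eq p q a b t :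
  (forall s, a <= s <= b -> p s = q s) -> a <= t <= b ->
  continuous_within p a b t -> continuous_within q a b t.
Proof.
move=> pq ht cp e /cp[eta eta_gt0 h]; exists eta => // s hs st.
by rewrite -!pq //; apply: h.
Qed.

Lemma continuous_within_comp_affine p k c a b t : 0 < k ->
  continuous_within p (k * a + c) (k * b + c) (k * t + c) ->
  continuous_within (fun s => p (k * s + c)) a b t.
Proof.
move=> k_gt0 cp e /cp[eta eta_gt0 h]; exists (eta / k).
  exact: divr_gt0.
move=> s /andP[s_a s_b] st; apply: h; first by apply/andP; split; nra.
rewrite opprD addrACA subrr addr0 -mulrBr normrM gtr0_norm //.
by rewrite -(ltr_pM2l k_gt0) mulrCA divff ?mulr1 ?gt_eqF in st.
Qed.

Lemma geodesic_path x y g :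
  geodesic d x y g -> path_from_to d x y (fun t => g (t * d x y)).
Proof.
move=> hg; case: (hg) => [g0 [g1 g_iso]].
split; first by rewrite mul0r. split; first by rewrite mul1r.
have := dist_ge0 x y => d_ge0.
move=> t /andP[t0 t1] e e_gt0; exists (e / (d x y + 1)).
  by apply: divr_gt0 => //; lra.
move=> s /andP[s0 s1] st; rewrite g_iso; try by apply/andP; split; nra.
have e_eq : e / (d x y + 1) * (d x y + 1) = e by rewrite divfK // gt_eqF //; lra.
by move: st; rewrite !ltr_norml => /andP[h1 h2]; apply/andP; split; nra.
Qed.

Definition path_cat (p1 p2 : R -> T) (t : R) : T :=
  if t <= 1/2 then p1 (2 * t) else p2 (2 * t - 1).

Lemma path_from_to_cat x y z p1 p2 :
  path_from_to d x y p1 -> path_from_to d y z p2 ->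
  path_from_to d x z (path_cat p1 p2).
Proof.
move=> [p10 [p11 c1]] [p20 [p21 c2]].
have cat_lo s : 0 <= s <= 1/2 -> p1 (2 * s + 0) = path_cat p1 p2 s.
  by case/andP=> _ hs; rewrite /path_cat hs addr0.
have cat_hi s : 1/2 <= s <= 1 -> p2 (2 * s + -1) = path_cat p1 p2 s.
  rewrite /path_cat; case/andP=> hs _; case: ifP => // hs'.
  have -> : s = 1/2 by apply/eqP; rewrite eq_le hs hs'.
  have -> : 2 * (1/2) = 1 :> R by lra.
  by rewrite subrr p11 p20.
split; first by rewrite -cat_lo ?mulr0 ?addr0 //; lra.
split; first by rewrite -cat_hi; [have -> : 2 * 1 + -1 = 1 :> R by lra | lra].
move=> t /andP[t0 t1].
apply: (continuous_within_glue (m := 1/2)).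
- case: (lerP t (1/2)) => ht; last by apply: continuous_within_outside; right.
  apply: continuous_within_eq cat_lo _ _; first lra.
  apply: continuous_within_comp_affine; first lra.
  have -> : 2 * 0 + 0 = 0 :> R by lra.
  have -> : 2 * (1/2) + 0 = 1 :> R by lra.
  by apply: c1; lra.
- case: (lerP (1/2) t) => ht; last by apply: continuous_within_outside; left.
  apply: continuous_within_eq cat_hi _ _; first lra.
  apply: continuous_within_comp_affine; first lra.
  have -> : 2 * (1/2) + -1 = 0 :> R by lra.
  have -> : 2 * 1 + -1 = 1 :> R by lra.
  by apply: c2; lra.
Qed.

Variable x0 : T.

Lemma gromov_le_distl x y : gromov d x0 x y <= d x0 x.
Proof. by rewrite /gromov; have := dist_triangle x0 x y; lra. Qed.

Lemma gromov_le_distr x y : gromov d x0 x y <= d x0 y.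
Proof.
by rewrite /gromov; have := dist_triangle x0 y x; rewrite (distC y x); lra.
Qed.

Lemma gromov_le_geodesic x y g t : geodesic d x y g -> 0 <= t <= d x y ->
  gromov d x0 x y <= d x0 (g t).
Proof.
move=> hg ht; have := geodesic_dist_start hg ht; have := geodesic_dist_end hg ht.
rewrite /gromov; have := dist_triangle x0 (g t) x; have := dist_triangle x0 (g t) y.
by rewrite (distC (g t) x); lra.
Qed.

Lemma chain_min_le_first x s : chain_min d x0 x s <= d x0 x.
Proof.
case: s => [|y [|z s]] /=; first exact: dist_ge0; first exact: gromov_le_distl.
by rewrite ge_min gromov_le_distl.
Qed.

Lemma chain_min_le_last x s : chain_min d x0 x s <= d x0 (last x s).
Proof.
elim: s x => [|y s IH] x /=; first exact: dist_ge0.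
case: s IH => [|z s] IH /=; first exact: gromov_le_distr.
by rewrite ge_min IH orbT.
Qed.

Lemma chain_min_cat x s1 s2 : (0 < size s1)%N -> (0 < size s2)%N ->
  chain_min d x0 x (s1 ++ s2) =
  Num.min (chain_min d x0 x s1) (chain_min d x0 (last x s1) s2).
Proof.
elim: s1 x => [//|y s1 IH] x _ s2_gt0.
case: s1 IH => [|z s1] IH; first by case: s2 s2_gt0 {IH}.
have -> : chain_min d x0 x ((y :: z :: s1) ++ s2) =
  Num.min (gromov d x0 x y) (chain_min d x0 y ((z :: s1) ++ s2)) by [].
by rewrite IH // minA.
Qed.

Definition chain_values x y : set R :=
  [set r | exists s : seq T,
    (0 < size s)%N /\ last x s = y /\ r = chain_min d x0 x s].

Lemma chain_values_gromov x y : chain_values x y (gromov d x0 x y).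
Proof. by exists [:: y]. Qed.

Lemma chain_values_ubound_distl x y : ubound (chain_values x y) (d x0 x).
Proof. by move=> r [s [_ [_ ->]]]; apply: chain_min_le_first. Qed.

Lemma chain_values_ubound_distr x y : ubound (chain_values x y) (d x0 y).
Proof. by move=> r [s [_ [<- ->]]]; apply: chain_min_le_last. Qed.

Lemma gromov_le_gromov' x y : gromov d x0 x y <= gromov' d x0 x y.
Proof.
apply: ub_le_sup; last exact: chain_values_gromov.
by exists (d x0 y); apply: chain_values_ubound_distr.
Qed.

Lemma gromov'_le_distl x y : gromov' d x0 x y <= d x0 x.
Proof.
apply: ge_sup; last exact: chain_values_ubound_distl.
by exists (gromov d x0 x y); apply: chain_values_gromov.
Qed.

Lemma gromov'_le_distr x y : gromov' d x0 x y <= d x0 y.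
Proof.
apply: ge_sup; last exact: chain_values_ubound_distr.
by exists (gromov d x0 x y); apply: chain_values_gromov.
Qed.

Lemma gromov'_ge_min x y z :
  Num.min (gromov' d x0 x y) (gromov' d x0 y z) <= gromov' d x0 x z.
Proof.
rewrite leNgt lt_min; apply/negP => /andP[xy_gt yz_gt].
have [_ [s1 [s1_gt0 [s1_last ->]]] s1_gt] :=
  sup_gt (ex_intro _ _ (chain_values_gromov x y)) xy_gt.
have [_ [s2 [s2_gt0 [s2_last ->]]] s2_gt] :=
  sup_gt (ex_intro _ _ (chain_values_gromov y z)) yz_gt.
have s12 : chain_values x z (chain_min d x0 x (s1 ++ s2)).
  exists (s1 ++ s2); rewrite size_cat addn_gt0 s1_gt0 last_cat s1_last.
  by split.
have : chain_min d x0 x (s1 ++ s2) <= gromov' d x0 x z.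
  apply: ub_le_sup s12; exists (d x0 z); exact: chain_values_ubound_distr.
by rewrite chain_min_cat // s1_last ge_min => /orP[] h; lra.
Qed.

Lemma dprime_xx x : dprime d x0 x x = 0.
Proof.
rewrite /dprime; have := gromov_le_gromov' x x; have := gromov'_le_distl x x.
by rewrite /gromov dist_xx; lra.
Qed.

Lemma dprime_triangle x y z :
  dprime d x0 x z <= dprime d x0 x y + dprime d x0 y z.
Proof.
rewrite /dprime; have := gromov'_ge_min x y z.
have := gromov'_le_distr x y; have := gromov'_le_distl y z.
by rewrite ge_min => h1 h2 /orP[] h; lra.
Qed.

Lemma dprime_eclass x x' y y' :
  eclass d x0 x = eclass d x0 x' -> eclass d x0 y = eclass d x0 y' ->
  dprime d x0 x' y' = dprime d x0 x y.
Proof.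
have eclass_eq0 u v : eclass d x0 u = eclass d x0 v ->
    dprime d x0 u v = 0 /\ dprime d x0 v u = 0.
  move=> uv; have v_v : eclass d x0 v v by apply: dprime_xx.
  have u_u : eclass d x0 u u by apply: dprime_xx.
  by rewrite -uv in v_v; rewrite uv in u_u.
move=> /eclass_eq0[xx' x'x] /eclass_eq0[yy' y'y].
have := dprime_triangle x x' y'; have := dprime_triangle x y' y.
have := dprime_triangle x' x y; have := dprime_triangle x' y y'.
lra.
Qed.

Lemma dprime_le_dist x y : dprime d x0 x y <= d x y.
Proof. by rewrite /dprime; have := gromov_le_gromov' x y; rewrite /gromov; lra. Qed.

Hypothesis d_geodesic : geodesic_space d.

Lemma exists_chain_path x s : (0 < size s)%N ->
  exists p, path_from_to d x (last x s) p /\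
    forall t, 0 <= t <= 1 -> chain_min d x0 x s <= d x0 (p t).
Proof.
elim: s x => [//|y s IH] x _.
have [g hg] := d_geodesic x y; have := dist_ge0 x y => d_ge0.
have g_above t : 0 <= t <= 1 -> gromov d x0 x y <= d x0 (g (t * d x y)).
  by case/andP=> t0 t1; apply: gromov_le_geodesic hg _; apply/andP; split; nra.
case: s IH => [|z s] IH.
  by exists (fun t => g (t * d x y)); split; [apply: geodesic_path|].
have [p [hp p_above]] := IH y isT.
exists (path_cat (fun t => g (t * d x y)) p); split.
  exact: path_from_to_cat (geodesic_path hg) hp.
move=> t /andP[t0 t1] /=; rewrite /path_cat ge_min; case: ifP => ht.
  by rewrite g_above //; apply/andP; split; lra.
move/negbT: ht; rewrite -ltNge => ht.
by rewrite p_above ?orbT //; apply/andP; split; lra.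
Qed.

Variable delta : R.
Hypothesis d_hyperbolic : hyperbolic d delta.

(* The witness is the internal point on [x,y] of the triangle (x, y, x0);
   slimness puts it delta-close to [y,x0] or [x0,x]. *)
Lemma geodesic_point_near_base x y g : geodesic d x y g -> exists z,
  on_geodesic d x y g z /\ d x0 z <= gromov d x0 x y + 2 * delta.
Proof.
move=> hg; have [g1 h1] := d_geodesic y x0; have [g2 h2] := d_geodesic x0 x.
have [slim _] := d_hyperbolic hg h1 h2.
set t0 := (d x y + d x0 x - d x0 y) / 2.
have ht0 : 0 <= t0 <= d x y.
  have := dist_triangle x0 x y; have := dist_triangle x0 y x; rewrite (distC y x).
  by rewrite /t0 => *; apply/andP; split; lra.
have [q [hq qz]] := slim (g t0) (ex_intro _ t0 (conj ht0 erefl)).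
exists (g t0); split; first by exists t0.
have := geodesic_dist_start hg ht0; have := geodesic_dist_end hg ht0.
rewrite /gromov /t0; case: hq qz => [[s [hs <-]]|[s [hs <-]]] qz.
- have := geodesic_dist_start h1 hs; have := geodesic_dist_end h1 hs.
  have := dist_triangle (g t0) (g1 s) y; have := dist_triangle x0 (g1 s) (g t0).
  by rewrite (distC (g1 s) y) (distC (g1 s) (g t0)) (distC x0 (g1 s)) (distC y x0); lra.
- have := geodesic_dist_start h2 hs; have := geodesic_dist_end h2 hs.
  have := dist_triangle x (g2 s) (g t0); have := dist_triangle x0 (g2 s) (g t0).
  by rewrite (distC (g2 s) (g t0)) (distC x (g2 s)); lra.
Qed.

Variable Delta : R.
Hypothesis d_bottleneck : bottleneck d Delta.

Lemma chain_min_le_gromov x y s : (0 < size s)%N -> last x s = y ->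
  chain_min d x0 x s <= gromov d x0 x y + Delta + 2 * delta.
Proof.
move=> s_gt0 s_last; have [g hg] := d_geodesic x y.
have [z [hz z_near]] := geodesic_point_near_base hg.
have [p [hp p_above]] := exists_chain_path x s_gt0; rewrite s_last in hp.
have [t [ht pt_z]] := d_bottleneck hg hz hp.
have := p_above t ht; have := dist_triangle x0 z (p t).
by rewrite (distC z (p t)); lra.
Qed.

Lemma gromov'_le_gromov x y :
  gromov' d x0 x y <= gromov d x0 x y + Delta + 2 * delta.
Proof.
apply: ge_sup; first by exists (gromov d x0 x y); apply: chain_values_gromov.
by move=> r [s [s_gt0 [s_last ->]]]; apply: chain_min_le_gromov.
Qed.

Lemma dist_le_dprime x y : d x y - 2 * (Delta + 2 * delta) <= dprime d x0 x y.
Proof. by rewrite /dprime; have := gromov'_le_gromov x y; rewrite /gromov; lra. Qed.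

End Metric.

Theorem proposition4p2 (R : realType) (T : Type) (d : T -> T -> R)
  (Delta delta : R) (x0 : T) :
  is_metric d -> geodesic_space d -> quasi_tree d ->
  0 <= Delta -> bottleneck d Delta -> hyperbolic d delta ->
  (forall S, TX d x0 S -> exists x, eclass d x0 x = S) /\
  (forall x y r, dstar d x0 (eclass d x0 x) (eclass d x0 y) r ->
     d x y - 2 * (Delta + 2 * delta) <= r /\ r <= d x y).
Proof.
move=> d_metric d_geodesic _ _ d_bottleneck d_hyperbolic.
split; first by move=> S [x ->]; exists x.
move=> x y r [x' [y' [xx' [yy' ->]]]].
rewrite (dprime_eclass d_metric xx' yy').
split; first exact: dist_le_dprime.
exact: dprime_le_dist.
Qed.
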